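(* For each integer $n \ge 2$ and real $\gamma$, let $\mathcal{L}_n(\gamma)$ be the infinite graph with vertex set $\mathbb{Z}^+ = \{1,2,3,\ldots\}$ in which the vertices $1,\ldots,n$ form a complete graph $K_n$, the vertices $n, n+1, n+2, \ldots$ form an infinite path (edges $\{k,k+1\}$ for all $k \ge n$), and vertex $1$ carries a self-loop of weight $\gamma$. Let $H$ be its adjacency operator on $\ell^2(\mathbb{Z}^+)$, i.e. the bounded self-adjoint operator with matrix entries (in the standard basis $\{e_j\}_{j\ge1}$) $\langle e_1, He_1\rangle=\gamma$, $\langle e_i, He_j\rangle = 1$ for distinct $i,j\in\{1,\ldots,n\}$, $\langle e_k, He_{k+1}\rangle=\langle e_{k+1}, He_k\rangle=1$ for $k\ge n$, and all other entries $0$. Let $z_1 = n^{-1/2}\sum_{j=1}^{n} e_j$. If $\gamma = n + \mathcal{O}(1)$, then for $t = \pi/(2\sqrt{n})$, \[ \left|\langle e_1, e^{-itH} z_1\rangle\right| = \Omega(1). \]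
   Context: Asymptotic notation refers to $n\to\infty$: $\gamma=\gamma_n$ with $\gamma_n - n$ bounded, and $\Omega(1)$ means bounded below by a positive constant for all sufficiently large $n$. The inner product is $\langle x,y\rangle=\sum_u \overline{x_u}y_u$. *)

From Stdlib Require Import Reals Arith.
From Coquelicot Require Import Coquelicot.
Open Scope R_scope.

(* Vertices are the positive naturals 1,2,3,...; index 0 is unused (entries 0). *)
Definition adj (n : nat) (g : R) (i j : nat) : R :=
  if (Nat.eqb i 0 || Nat.eqb j 0)%bool then 0
  else if (Nat.eqb i 1 && Nat.eqb j 1)%bool then g
  else if (Nat.leb i n && Nat.leb j n && negb (Nat.eqb i j))%bool then 1
  else if ((Nat.leb n i && Nat.eqb j (S i)) || (Nat.leb n j && Nat.eqb i (S j)))%bool then 1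
  else 0.

(* Action of H on a vector v : nat -> R.  Row i has nonzero entries only in
   columns j <= max n (i+1), so this finite sum is exactly sum_j H_ij v_j. *)
Definition Hop (n : nat) (g : R) (v : nat -> R) : nat -> R :=
  fun i => sum_f_R0 (fun j => adj n g i j * v j) (S (Nat.max n i)).

Definition Hpow (n : nat) (g : R) (k : nat) (v : nat -> R) : nat -> R :=
  Nat.iter k (Hop n g) v.

Definition z1 (n : nat) : nat -> R :=
  fun j => if (Nat.leb 1 j && Nat.leb j n)%bool then / sqrt (INR n) else 0.

(* k-th term of <e_1, e^{-itH} z_1> = sum_k (-it)^k / k! <e_1, H^k z_1>
   (H is real symmetric and bounded, so the exponential is its power series). *)
Definition amp_term (n : nat) (g t : R) (k : nat) : C :=
  Cmult (pow_n (K := C_Ring) (Cmult (RtoC (- t)) Ci) k)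
        (RtoC (Hpow n g k (z1 n) 1%nat / INR (fact k))).

Definition amplitude_is (n : nat) (g t : R) (l : C) : Prop :=
  @is_series C_AbsRing C_NormedModule (amp_term n g t) l.

(* The clique part of H alone (loop weight n, no path) has an explicit solution psi of the
   Schroedinger equation starting at z_1, which at time pi / (2 sqrt n) sits entirely on e_1
   up to a phase.  For H itself psi is an approximate solution whose residual lives on the
   vertices 1 and n + 1 and is O(|gamma - n| + 1).  As H is symmetric the squared l^2 error
   obeys E' <= E + O(1), so E(t) = O(t) by Gronwall, which is o(1) at t = pi / (2 sqrt n).

   The real and imaginary parts of e^{-itH} z_1 are power series in t with coefficients
   H^k z_1 / k!.  The energy is only summed up to a vertex n + K: since H^k z_1 is supported
   on the vertices <= n + k, the flux through the edge {n + K, n + K + 1} is exponentially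
   small in K. *)
From Stdlib Require Import Reals Arith Lia Lra Psatz.
From Coquelicot Require Import Coquelicot.
Open Scope R_scope.

Ltac case_nat := repeat match goal with
  | |- context [Nat.eqb ?a ?b] => destruct (Nat.eqb_spec a b); try (exfalso; lia)
  | |- context [Nat.leb ?a ?b] => destruct (Nat.leb_spec a b); try (exfalso; lia)
  end; cbn beta iota delta [andb orb negb Nat.pred].

Lemma sum_f_R0_zero (f : nat -> R) N :
  (forall j, (j <= N)%nat -> f j = 0) -> sum_f_R0 f N = 0.
Proof. intros Hf. rewrite (sum_eq _ (fun _ => 0)) by exact Hf. rewrite sum_cte. ring. Qed.

Lemma sum_f_R0_indicator a c N :
  (a <= N)%nat -> sum_f_R0 (fun j => if Nat.eqb j a then c else 0) N = c.
Proof.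
  induction N as [|N IH]; intros Ha; cbn [sum_f_R0].
  - replace a with 0%nat by lia. reflexivity.
  - destruct (Nat.eq_dec a (S N)) as [->|Hne].
    + rewrite sum_f_R0_zero, Nat.eqb_refl; [ring|].
      intros j Hj. case_nat. reflexivity.
    + rewrite IH by lia. case_nat. ring.
Qed.

Lemma Rabs_sum_f_R0_le (f : nat -> R) N m :
  (forall j, (j <= N)%nat -> Rabs (f j) <= m) -> Rabs (sum_f_R0 f N) <= INR (S N) * m.
Proof.
  intros Hf. eapply Rle_trans; [apply sum_f_R0_triangle|].
  rewrite Rmult_comm, <- sum_cte. apply sum_Rle. exact Hf.
Qed.

Lemma sum_f_R0_ge_two_terms (f : nat -> R) a b N :
  (forall j, 0 <= f j) -> a <> b -> (a <= N)%nat -> (b <= N)%nat ->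
  f a + f b <= sum_f_R0 f N.
Proof.
  intros Hf Hab Ha Hb.
  rewrite <- (sum_f_R0_indicator a (f a) N Ha), <- (sum_f_R0_indicator b (f b) N Hb), <- plus_sum.
  apply sum_Rle. intros j _. pose proof (Hf j).
  destruct (Nat.eqb_spec j a), (Nat.eqb_spec j b); subst; try lia; lra.
Qed.

Lemma is_derive_sum_f_R0 (f : nat -> R -> R) (df : nat -> R) J t :
  (forall j, (j <= J)%nat -> is_derive (f j) t (df j)) ->
  is_derive (fun s => sum_f_R0 (fun j => f j s) J) t (sum_f_R0 df J).
Proof.
  induction J as [|J IH]; intros Hf; cbn [sum_f_R0].
  - apply Hf; lia.
  - apply (is_derive_plus (fun s => sum_f_R0 (fun j => f j s) J) (f (S J))).
    + apply IH; intros; apply Hf; lia.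
    + apply Hf; lia.
Qed.

Definition clique_sum (n : nat) (v : nat -> R) : R :=
  sum_f_R0 (fun j => if Nat.eqb j 0 then 0 else v j) n.

Definition Hclosed (n : nat) (g : R) (v : nat -> R) (i : nat) : R :=
  if Nat.eqb i 0 then 0 else
  if Nat.leb i n then
    clique_sum n v - v i + (if Nat.eqb i 1 then g * v 1%nat else 0)
    + (if Nat.eqb i n then v (S n) else 0)
  else v (pred i) + v (S i).

Lemma Hop_Hclosed n g v i : (2 <= n)%nat -> Hop n g v i = Hclosed n g v i.
Proof.
  intros Hn. unfold Hop, Hclosed.
  destruct (Nat.eqb_spec i 0) as [->|Hi0].
  { apply sum_f_R0_zero. intros j _. unfold adj. simpl. ring. }
  destruct (Nat.leb_spec i n).
  - rewrite Nat.max_l by lia. cbn [sum_f_R0].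
    rewrite (sum_eq _ (fun j => ((if Nat.eqb j 0 then 0 else v j)
        - (if Nat.eqb j i then v i else 0))
        + (if Nat.eqb j 1 then (if Nat.eqb i 1 then g * v 1%nat else 0) else 0))).
    2:{ intros j Hj. unfold adj. case_nat; subst; ring. }
    rewrite plus_sum, minus_sum, !sum_f_R0_indicator by lia.
    unfold clique_sum, adj. case_nat; ring.
  - rewrite Nat.max_r by lia.
    rewrite (sum_eq _ (fun j => (if Nat.eqb j (pred i) then v (pred i) else 0)
        + (if Nat.eqb j (S i) then v (S i) else 0))).
    2:{ intros j Hj. unfold adj. case_nat; subst; cbn [pred]; ring. }
    rewrite plus_sum, !sum_f_R0_indicator by lia. ring.
Qed.

Lemma Hclosed_sub n g v w j :
  Hclosed n g v j - Hclosed n g w j = Hclosed n g (fun i => v i - w i) j.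
Proof.
  unfold Hclosed, clique_sum.
  rewrite (sum_eq (fun i => if Nat.eqb i 0 then 0 else v i - w i)
     (fun i => (if Nat.eqb i 0 then 0 else v i) - (if Nat.eqb i 0 then 0 else w i)))
    by (intros i _; destruct (Nat.eqb i 0); ring).
  rewrite minus_sum. destruct (Nat.eqb j 0); [ring|]. destruct (Nat.leb j n); [|ring].
  destruct (Nat.eqb j 1), (Nat.eqb j n); ring.
Qed.

(* Discrete Green formula: H is symmetric, so only the flux across the edge {J, J+1} survives. *)
Lemma sum_Hclosed_skew n g p q J : (2 <= n)%nat -> (n <= J)%nat ->
  sum_f_R0 (fun j => p j * Hclosed n g q j - q j * Hclosed n g p j) J
  = p J * q (S J) - q J * p (S J).
Proof.
  intros Hn HJ. induction J as [|J IH]; [lia|].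
  destruct (Nat.eq_dec n (S J)) as [<-|Hne].
  - rewrite (sum_eq _ (fun j => ((if Nat.eqb j 0 then 0 else p j) * clique_sum n q
        - (if Nat.eqb j 0 then 0 else q j) * clique_sum n p)
        + (if Nat.eqb j n then p n * q (S n) - q n * p (S n) else 0))).
    2:{ intros j Hj. unfold Hclosed. case_nat; subst; ring. }
    rewrite plus_sum, minus_sum, <- !scal_sum, sum_f_R0_indicator by lia.
    unfold clique_sum. ring.
  - cbn [sum_f_R0]. rewrite IH by lia. unfold Hclosed. case_nat.
    replace (pred (S J)) with J by lia. ring.
Qed.

Definition Hnorm_bound (n : nat) (g : R) : R := INR n + Rabs g + 3.

Lemma Hnorm_bound_nonneg n g : 0 <= Hnorm_bound n g.
Proof. unfold Hnorm_bound. pose proof (pos_INR n). pose proof (Rabs_pos g). lra. Qed.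

Lemma Hop_abs_le n g v m : (2 <= n)%nat -> (forall j, Rabs (v j) <= m) ->
  forall i, Rabs (Hop n g v i) <= Hnorm_bound n g * m.
Proof.
  intros Hn Hv i.
  assert (Hm : 0 <= m) by (eapply Rle_trans; [apply Rabs_pos|apply (Hv 0%nat)]).
  pose proof (Rabs_pos g). pose proof (pos_INR n).
  assert (Hsum : Rabs (clique_sum n v) <= (INR n + 1) * m).
  { rewrite <- S_INR. apply Rabs_sum_f_R0_le. intros j _.
    destruct (Nat.eqb j 0); [rewrite Rabs_R0; lra|apply Hv]. }
  rewrite Hop_Hclosed by exact Hn. unfold Hclosed, Hnorm_bound.
  destruct (Nat.eqb i 0); [rewrite Rabs_R0; nra|].
  destruct (Nat.leb i n).
  - assert (Hloop : Rabs (if Nat.eqb i 1 then g * v 1%nat else 0) <= Rabs g * m).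
    { destruct (Nat.eqb i 1); [|rewrite Rabs_R0; nra].
      rewrite Rabs_mult. apply Rmult_le_compat_l; auto. }
    assert (Hpath : Rabs (if Nat.eqb i n then v (S n) else 0) <= m).
    { destruct (Nat.eqb i n); [auto|rewrite Rabs_R0; lra]. }
    pose proof (Hv i).
    eapply Rle_trans; [apply Rabs_triang|].
    eapply Rle_trans; [apply Rplus_le_compat_r, Rabs_triang|].
    eapply Rle_trans; [apply Rplus_le_compat_r, Rplus_le_compat_r, Rabs_triang|].
    rewrite Rabs_Ropp. nra.
  - eapply Rle_trans; [apply Rabs_triang|].
    pose proof (Hv (pred i)). pose proof (Hv (S i)). nra.
Qed.

Lemma Hop_opp n g v i : Hop n g (fun j => - v j) i = - Hop n g v i.
Proof.
  unfold Hop. rewrite (sum_eq _ (fun j => adj n g i j * v j * -1)) by (intros; ring).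
  rewrite <- scal_sum. ring.
Qed.

Lemma z1_abs_le_1 n : (1 <= n)%nat -> forall j, Rabs (z1 n j) <= 1.
Proof.
  intros Hn j. unfold z1. destruct (_ && _)%bool; [|rewrite Rabs_R0; lra].
  assert (Hsq : 1 <= sqrt (INR n)).
  { rewrite <- sqrt_1. apply sqrt_le_1_alt. apply (le_INR 1). exact Hn. }
  rewrite Rabs_pos_eq by (apply Rlt_le, Rinv_0_lt_compat; lra).
  rewrite <- Rinv_1. apply Rinv_le_contravar; lra.
Qed.

Lemma Hpow_z1_abs_le n g k : (2 <= n)%nat ->
  forall j, Rabs (Hpow n g k (z1 n) j) <= Hnorm_bound n g ^ k.
Proof.
  intros Hn. induction k as [|k IH]; intros j.
  - apply z1_abs_le_1. lia.
  - apply Hop_abs_le; assumption.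
Qed.

Lemma Hpow_z1_support n g k : (2 <= n)%nat ->
  forall j, (n + k < j)%nat -> Hpow n g k (z1 n) j = 0.
Proof.
  intros Hn. induction k as [|k IH]; intros j Hj.
  - change (z1 n j = 0). unfold z1. case_nat. reflexivity.
  - change (Hop n g (Hpow n g k (z1 n)) j = 0).
    rewrite Hop_Hclosed by exact Hn. unfold Hclosed. case_nat.
    rewrite !IH by lia. ring.
Qed.

Fixpoint ipow (k : nat) : R * R :=
  match k with O => (1, 0) | S k => (- snd (ipow k), fst (ipow k)) end.

Lemma ipow_abs_le k : Rabs (fst (ipow k)) <= 1 /\ Rabs (snd (ipow k)) <= 1.
Proof.
  induction k as [|k IH]; simpl.
  - rewrite Rabs_R1, Rabs_R0. lra.
  - rewrite Rabs_Ropp. tauto.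
Qed.

Lemma ipow_fst_abs_le k : Rabs (fst (ipow k)) <= 1.
Proof. apply ipow_abs_le. Qed.

Lemma ipow_snd_opp_abs_le k : Rabs (- snd (ipow k)) <= 1.
Proof. rewrite Rabs_Ropp. apply ipow_abs_le. Qed.

Lemma ipow_parity k :
  fst (ipow k) * (-1) ^ k = fst (ipow k) /\ snd (ipow k) * (-1) ^ k = - snd (ipow k).
Proof.
  induction k as [|k [IHre IHim]]; simpl.
  - split; ring.
  - split.
    + replace (- snd (ipow k) * (-1 * (-1) ^ k)) with (snd (ipow k) * (-1) ^ k) by ring.
      rewrite IHim. ring.
    + replace (fst (ipow k) * (-1 * (-1) ^ k)) with (- (fst (ipow k) * (-1) ^ k)) by ring.
      rewrite IHre. ring.
Qed.

Lemma pow_n_mul_Ci t k :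
  pow_n (K := C_Ring) (Cmult (RtoC t) Ci) k = (t ^ k * fst (ipow k), t ^ k * snd (ipow k)).
Proof.
  induction k as [|k IH].
  - apply injective_projections; simpl; ring.
  - simpl pow_n. rewrite IH. unfold mult; simpl. unfold Cmult, RtoC, Ci; simpl.
    f_equal; ring.
Qed.

Lemma Rabs_lt_CV_radius_exp_bound (a : nat -> R) M :
  0 <= M -> (forall k, Rabs (a k) <= M ^ k / INR (fact k)) ->
  forall x, Rbar_lt (Rabs x) (CV_radius a).
Proof.
  intros HM Ha x. pose proof (Rabs_pos x).
  assert (Hdisk : CV_disk a (Rabs x + 1)).
  { apply (@ex_series_le R_AbsRing R_CompleteNormedModule _
             (fun k => / INR (fact k) * (M * (Rabs x + 1)) ^ k)).
    - intros k. change (norm (Rabs (a k * (Rabs x + 1) ^ k)))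
        with (Rabs (Rabs (a k * (Rabs x + 1) ^ k))).
      rewrite Rabs_Rabsolu, Rabs_mult, Rpow_mult_distr.
      assert (0 <= (Rabs x + 1) ^ k) by (apply pow_le; lra).
      rewrite (Rabs_pos_eq ((Rabs x + 1) ^ k)) by assumption.
      specialize (Ha k). unfold Rdiv in Ha. nra.
    - eexists. apply (proj1 (is_pseries_R _ _ _)), is_exp_Reals. }
  eapply Rbar_lt_le_trans; [|apply (proj1 (Lub_Rbar_correct (CV_disk a))), Hdisk].
  simpl. lra.
Qed.

Lemma exp_bound_tail_le M K k : 0 <= M ->
  (if Nat.leb K k then M ^ k else 0) <= / 2 ^ K * (2 * M) ^ k.
Proof.
  intros HM. assert (H2K : 0 < 2 ^ K) by (apply pow_lt; lra).
  destruct (Nat.leb_spec K k).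
  - rewrite Rpow_mult_distr.
    assert (2 ^ K <= 2 ^ k) by (apply Rle_pow; lra || lia).
    assert (0 <= M ^ k) by (apply pow_le; exact HM).
    apply (Rmult_le_reg_l (2 ^ K)); [exact H2K|].
    rewrite <- Rmult_assoc, Rinv_r by lra. nra.
  - apply Rmult_le_pos; [apply Rlt_le, Rinv_0_lt_compat, H2K|apply pow_le; lra].
Qed.

Lemma PSeries_abs_le_exp_tail (a : nat -> R) M K x : 0 <= M -> Rabs x <= 1 ->
  (forall k, Rabs (a k) <= (if Nat.leb K k then M ^ k else 0) / INR (fact k)) ->
  Rabs (PSeries a x) <= exp (2 * M) / 2 ^ K.
Proof.
  intros HM Hx Ha.
  set (b := fun k => / 2 ^ K * (/ INR (fact k) * (2 * M) ^ k)).
  assert (Hexp : is_series (fun k => / INR (fact k) * (2 * M) ^ k) (exp (2 * M)))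
    by apply (proj1 (is_pseries_R _ _ _)), is_exp_Reals.
  assert (Hb : is_series b (/ 2 ^ K * exp (2 * M)))
    by apply (@is_series_scal_l R_AbsRing R_NormedModule), Hexp.
  assert (Hab : forall k, Rabs (a k * x ^ k) <= b k).
  { intros k. unfold b. rewrite Rabs_mult, <- RPow_abs.
    assert (Rabs x ^ k <= 1) by (rewrite <- (pow1 k); apply pow_incr; split; [apply Rabs_pos|exact Hx]).
    assert (0 <= Rabs x ^ k) by (apply pow_le, Rabs_pos).
    assert (0 < / INR (fact k)) by (apply Rinv_0_lt_compat, INR_fact_lt_0).
    pose proof (exp_bound_tail_le M K k HM). pose proof (Ha k). pose proof (Rabs_pos (a k)).
    unfold Rdiv in *. nra. }
  assert (Hex : ex_series (fun k => Rabs (a k * x ^ k))).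
  { apply (@ex_series_le R_AbsRing R_CompleteNormedModule _ b); [|eexists; exact Hb].
    intros k. change (norm (Rabs (a k * x ^ k))) with (Rabs (Rabs (a k * x ^ k))).
    rewrite Rabs_Rabsolu. apply Hab. }
  unfold PSeries. eapply Rle_trans; [apply Series_Rabs, Hex|].
  eapply Rle_trans; [apply Series_le; [intros k; split; [apply Rabs_pos|apply Hab]|eexists; exact Hb]|].
  unfold b. rewrite Series_scal_l, (is_series_unique _ _ Hexp).
  unfold Rdiv. lra.
Qed.

Lemma sum_f_R0_PSeries (a : nat -> nat -> R) (w : nat -> R) x N :
  (forall i, ex_pseries (a i) x) ->
  sum_f_R0 (fun i => w i * PSeries (a i) x) N
    = PSeries (fun k => sum_f_R0 (fun i => w i * a i k) N) x
  /\ ex_pseries (fun k => sum_f_R0 (fun i => w i * a i k) N) x.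
Proof.
  intros Ha.
  assert (Hscal : forall i, ex_pseries (fun k => w i * a i k) x).
  { intros i. apply (@ex_pseries_ext R_AbsRing R_NormedModule (PS_scal (w i) (a i))).
    - reflexivity.
    - apply ex_pseries_scal; [intros; apply Rmult_comm|apply Ha]. }
  assert (HPscal : forall i, w i * PSeries (a i) x = PSeries (fun k => w i * a i k) x).
  { intros i. rewrite <- PSeries_scal. reflexivity. }
  induction N as [|N [IHeq IHex]]; cbn [sum_f_R0].
  - split; [apply HPscal|apply Hscal].
  - split.
    + rewrite IHeq, HPscal, <- PSeries_plus by auto. reflexivity.
    + apply (@ex_pseries_ext R_AbsRing R_NormedModule
               (PS_plus (fun k => sum_f_R0 (fun i => w i * a i k) N) (fun k => w (S N) * a (S N) k))).
      * reflexivity.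
      * apply ex_pseries_plus; auto.
Qed.

Section Evolution.
Variables (n : nat) (g : R).
Hypothesis Hn : (2 <= n)%nat.

Definition evo_coef (c : nat -> R) (j k : nat) : R :=
  c k * Hpow n g k (z1 n) j / INR (fact k).

(* Real and imaginary parts of <e_j, e^{-itH} z_1>, using (-it)^k = t^k conj(i^k). *)
Definition evo_re (j : nat) (t : R) : R := PSeries (evo_coef (fun k => fst (ipow k)) j) t.
Definition evo_im (j : nat) (t : R) : R := PSeries (evo_coef (fun k => - snd (ipow k)) j) t.

Lemma Rabs_evo_coef_le c j k b : (forall k, Rabs (c k) <= 1) ->
  Rabs (Hpow n g k (z1 n) j) <= b -> Rabs (evo_coef c j k) <= b / INR (fact k).
Proof.
  intros Hc Hb. pose proof (INR_fact_lt_0 k). specialize (Hc k).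
  pose proof (Rabs_pos (c k)). pose proof (Rabs_pos (Hpow n g k (z1 n) j)).
  unfold evo_coef, Rdiv. rewrite !Rabs_mult, (Rabs_pos_eq (/ _)) by (apply Rlt_le, Rinv_0_lt_compat; lra).
  apply Rmult_le_compat_r; [apply Rlt_le, Rinv_0_lt_compat; lra|nra].
Qed.

Lemma evo_coef_radius c j x : (forall k, Rabs (c k) <= 1) ->
  Rbar_lt (Rabs x) (CV_radius (evo_coef c j)).
Proof.
  intros Hc. apply (Rabs_lt_CV_radius_exp_bound _ _ (Hnorm_bound_nonneg n g)).
  intros k. apply Rabs_evo_coef_le, Hpow_z1_abs_le; assumption.
Qed.

Lemma is_derive_evo_coef c d j t :
  (forall k, Rabs (c k) <= 1) -> (forall k, Rabs (d k) <= 1) -> (forall k, c (S k) = d k) ->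
  is_derive (PSeries (evo_coef c j)) t (Hop n g (fun i => PSeries (evo_coef d i) t) j).
Proof.
  intros Hc Hd Hcd.
  replace (Hop n g (fun i => PSeries (evo_coef d i) t) j)
    with (PSeries (PS_derive (evo_coef c j)) t).
  { apply is_derive_PSeries, evo_coef_radius, Hc. }
  unfold Hop. rewrite (proj1 (sum_f_R0_PSeries (fun i => evo_coef d i) _ t _
                         (fun i => CV_radius_inside _ _ (evo_coef_radius d i t Hd)))).
  apply PSeries_ext. intros k. unfold PS_derive, evo_coef.
  rewrite (sum_eq _ (fun i => adj n g j i * Hpow n g k (z1 n) i * (d k / INR (fact k))))
    by (intros; unfold Rdiv; ring).
  rewrite <- scal_sum, Hcd, fact_simpl, mult_INR.
  change (Hpow n g (S k) (z1 n) j) with (Hop n g (Hpow n g k (z1 n)) j). unfold Hop.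
  field. split; [apply INR_fact_neq_0|apply not_0_INR; lia].
Qed.

Lemma evo_re_derive j t : is_derive (evo_re j) t (Hop n g (fun i => evo_im i t) j).
Proof.
  apply is_derive_evo_coef; [exact ipow_fst_abs_le|exact ipow_snd_opp_abs_le|reflexivity].
Qed.

Lemma evo_im_derive j t : is_derive (evo_im j) t (- Hop n g (fun i => evo_re i t) j).
Proof.
  replace (- Hop n g (fun i => evo_re i t) j)
    with (Hop n g (fun i => PSeries (evo_coef (fun k => - fst (ipow k)) i) t) j).
  - apply is_derive_evo_coef; [exact ipow_snd_opp_abs_le| |reflexivity].
    intros k. rewrite Rabs_Ropp. apply ipow_fst_abs_le.
  - rewrite <- Hop_opp. unfold Hop. apply sum_eq. intros i _. f_equal.
    unfold evo_re. rewrite <- PSeries_opp. apply PSeries_ext.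
    intros k. unfold PS_opp, evo_coef, Rdiv. change (opp ?u) with (- u). ring.
Qed.

Lemma evo_coef_PSeries_tail c K x : (forall k, Rabs (c k) <= 1) -> Rabs x <= 1 ->
  Rabs (PSeries (evo_coef c (n + K)) x) <= exp (2 * Hnorm_bound n g) / 2 ^ K.
Proof.
  intros Hc Hx. apply PSeries_abs_le_exp_tail; [apply Hnorm_bound_nonneg|exact Hx|].
  intros k. apply Rabs_evo_coef_le; [exact Hc|].
  destruct (Nat.leb_spec K k).
  - apply Hpow_z1_abs_le, Hn.
  - rewrite Hpow_z1_support by lia. rewrite Rabs_R0. lra.
Qed.

End Evolution.

Definition omega (n : nat) : R := sqrt (INR n).
Definition theta (n : nat) : R := INR n - 1.

(* psi(t) = e^{-i theta t} (cos (omega t) z_1 - i sin (omega t) e_1).  On span {z_1, e_1} the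
   clique with loop weight n acts as theta + omega * (z_1 <-> e_1), so psi solves the
   Schroedinger equation there exactly. *)
Definition psi_re (n j : nat) (t : R) : R :=
  (if Nat.eqb j 1 then - sin (theta n * t) * sin (omega n * t) else 0)
  + (if (Nat.leb 1 j && Nat.leb j n)%bool
     then cos (theta n * t) * cos (omega n * t) / omega n else 0).
Definition psi_im (n j : nat) (t : R) : R :=
  (if Nat.eqb j 1 then - cos (theta n * t) * sin (omega n * t) else 0)
  + (if (Nat.leb 1 j && Nat.leb j n)%bool
     then - (sin (theta n * t) * cos (omega n * t) / omega n) else 0).

Definition res_re (n : nat) (g : R) (j : nat) (t : R) : R :=
  (if Nat.eqb j 1 then (g - INR n) * psi_im n 1 t else 0)
  + (if Nat.eqb j (S n) then psi_im n n t else 0).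
Definition res_im (n : nat) (g : R) (j : nat) (t : R) : R :=
  (if Nat.eqb j 1 then (g - INR n) * psi_re n 1 t else 0)
  + (if Nat.eqb j (S n) then psi_re n n t else 0).

Lemma omega_pos n : (1 <= n)%nat -> 0 < omega n.
Proof. intros Hn. apply sqrt_lt_R0, (lt_INR 0). lia. Qed.

Lemma omega_ge_1 n : (1 <= n)%nat -> 1 <= omega n.
Proof. intros Hn. rewrite <- sqrt_1. apply sqrt_le_1_alt, (le_INR 1), Hn. Qed.

Lemma omega_sqr n : omega n * omega n = INR n.
Proof. apply sqrt_sqrt, pos_INR. Qed.

Lemma clique_sum_e1_plus_const n a b : (1 <= n)%nat ->
  clique_sum n (fun i => (if Nat.eqb i 1 then a else 0)
                         + (if (Nat.leb 1 i && Nat.leb i n)%bool then b else 0))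
  = a + INR n * b.
Proof.
  intros Hn. unfold clique_sum.
  rewrite (sum_eq _ (fun j => (if Nat.eqb j 1 then a else 0) + (if Nat.eqb j 0 then 0 else 1) * b))
    by (intros j Hj; case_nat; ring).
  rewrite plus_sum, sum_f_R0_indicator, <- scal_sum by exact Hn.
  replace (sum_f_R0 _ n) with (INR n).
  - ring.
  - induction n as [|n IH]; [reflexivity|]. cbn [sum_f_R0].
    destruct n as [|n]; [simpl; ring|]. rewrite <- IH by lia. rewrite S_INR. simpl. ring.
Qed.

Section Model.
Variables (n : nat) (g : R).
Hypothesis Hn : (2 <= n)%nat.

Ltac solve_model_derive :=
  auto_derive; auto; unfold theta; rewrite <- ?omega_sqr;
  field; pose proof (omega_pos n ltac:(lia)); lra.

Lemma psi_re_derive j t :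
  is_derive (psi_re n j) t (Hclosed n g (fun i => psi_im n i t) j - res_re n g j t).
Proof.
  unfold Hclosed, res_re, psi_re, psi_im.
  rewrite clique_sum_e1_plus_const by lia. case_nat; solve_model_derive.
Qed.

Lemma psi_im_derive j t :
  is_derive (psi_im n j) t (- Hclosed n g (fun i => psi_re n i t) j + res_im n g j t).
Proof.
  unfold Hclosed, res_im, psi_re, psi_im.
  rewrite clique_sum_e1_plus_const by lia. case_nat; solve_model_derive.
Qed.

End Model.

Lemma Rabs_mul_le_1 u v : Rabs u <= 1 -> Rabs v <= 1 -> Rabs (u * v) <= 1.
Proof.
  intros Hu Hv. rewrite Rabs_mult. pose proof (Rabs_pos u). pose proof (Rabs_pos v). nra.
Qed.

Lemma Rabs_div_le a w : 1 <= w -> Rabs (a / w) <= Rabs a.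
Proof.
  intros Hw. unfold Rdiv. rewrite Rabs_mult, Rabs_inv, (Rabs_pos_eq w) by lra.
  assert (/ w <= 1) by (rewrite <- Rinv_1; apply Rinv_le_contravar; lra).
  assert (0 < / w) by (apply Rinv_0_lt_compat; lra).
  pose proof (Rabs_pos a). nra.
Qed.

Lemma Rabs_sin_le_1 x : Rabs (sin x) <= 1.
Proof. apply Rabs_le, SIN_bound. Qed.

Lemma Rabs_cos_le_1 x : Rabs (cos x) <= 1.
Proof. apply Rabs_le, COS_bound. Qed.

Lemma psi_re_abs_le n j t : (1 <= n)%nat -> Rabs (psi_re n j t) <= 2.
Proof.
  intros Hn. unfold psi_re. eapply Rle_trans; [apply Rabs_triang|].
  assert (Rabs (if Nat.eqb j 1 then - sin (theta n * t) * sin (omega n * t) else 0) <= 1).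
  { destruct (Nat.eqb j 1); [|rewrite Rabs_R0; lra].
    rewrite Ropp_mult_distr_l_reverse, Rabs_Ropp.
    apply Rabs_mul_le_1; apply Rabs_sin_le_1. }
  assert (Rabs (if (Nat.leb 1 j && Nat.leb j n)%bool
                then cos (theta n * t) * cos (omega n * t) / omega n else 0) <= 1).
  { destruct (_ && _)%bool; [|rewrite Rabs_R0; lra].
    eapply Rle_trans; [apply Rabs_div_le, omega_ge_1, Hn|].
    apply Rabs_mul_le_1; apply Rabs_cos_le_1. }
  lra.
Qed.

Lemma psi_im_abs_le n j t : (1 <= n)%nat -> Rabs (psi_im n j t) <= 2.
Proof.
  intros Hn. unfold psi_im. eapply Rle_trans; [apply Rabs_triang|].
  assert (Rabs (if Nat.eqb j 1 then - cos (theta n * t) * sin (omega n * t) else 0) <= 1).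
  { destruct (Nat.eqb j 1); [|rewrite Rabs_R0; lra].
    rewrite Ropp_mult_distr_l_reverse, Rabs_Ropp.
    apply Rabs_mul_le_1; [apply Rabs_cos_le_1|apply Rabs_sin_le_1]. }
  assert (Rabs (if (Nat.leb 1 j && Nat.leb j n)%bool
                then - (sin (theta n * t) * cos (omega n * t) / omega n) else 0) <= 1).
  { destruct (_ && _)%bool; [|rewrite Rabs_R0; lra].
    rewrite Rabs_Ropp. eapply Rle_trans; [apply Rabs_div_le, omega_ge_1, Hn|].
    apply Rabs_mul_le_1; [apply Rabs_sin_le_1|apply Rabs_cos_le_1]. }
  lra.
Qed.

Lemma psi_re_out n j t : (1 <= n < j)%nat -> psi_re n j t = 0.
Proof. intros Hj. unfold psi_re. case_nat. ring. Qed.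

Lemma psi_im_out n j t : (1 <= n < j)%nat -> psi_im n j t = 0.
Proof. intros Hj. unfold psi_im. case_nat. ring. Qed.

Lemma is_derive_sum_sqr (f h : R -> R) t df dh :
  is_derive f t df -> is_derive h t dh ->
  is_derive (fun s => f s * f s + h s * h s) t (2 * (f t * df) + 2 * (h t * dh)).
Proof.
  intros Hf Hh.
  pose proof (is_derive_plus _ _ _ _ _
    (is_derive_mult _ _ _ _ _ Hf Hf Rmult_comm) (is_derive_mult _ _ _ _ _ Hh Hh Rmult_comm)) as Hd.
  replace (2 * (f t * df) + 2 * (h t * dh))
    with (plus (plus (mult df (f t)) (mult (f t) df)) (plus (mult dh (h t)) (mult (h t) dh)))
    by (unfold plus, mult; simpl; ring).
  exact Hd.
Qed.

(* Gronwall: s |-> e^{-s} f s - s C is nonincreasing. *)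
Lemma gronwall_from_zero (f df : R -> R) C t :
  0 <= C -> 0 <= t -> f 0 = 0 -> (forall s, is_derive f s (df s)) ->
  (forall s, 0 <= s <= t -> df s <= f s + C) -> f t <= exp t * (t * C).
Proof.
  intros HC Ht Hf0 Hf Hdf.
  set (F := fun s => exp (- s) * f s - s * C).
  set (dF := fun s => exp (- s) * (df s - f s) - C).
  assert (HF : forall s, is_derive F s (dF s)).
  { intros s. unfold F, dF.
    assert (Hexp : is_derive (fun s => exp (- s)) s (- exp (- s))) by (auto_derive; auto; ring).
    assert (Hlin : is_derive (fun s => s * C) s C) by (auto_derive; auto; ring).
    pose proof (is_derive_minus _ _ _ _ _ (is_derive_mult _ _ _ _ _ Hexp (Hf s) Rmult_comm) Hlin) as Hd.
    replace (exp (- s) * (df s - f s) - C)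
      with (minus (plus (mult (- exp (- s)) (f s)) (mult (exp (- s)) (df s))) C)
      by (unfold minus, plus, opp, mult; simpl; ring).
    exact Hd. }
  destruct (MVT_gen F 0 t dF) as [c [Hc HFt]].
  { intros x _. apply HF. }
  { intros x _. apply continuity_pt_filterlim, (@ex_derive_continuous R_AbsRing R_NormedModule).
    eexists. apply HF. }
  rewrite Rmin_left, Rmax_right in Hc by lra.
  assert (HdF : dF c <= 0).
  { unfold dF. pose proof (Hdf c Hc). pose proof (exp_pos (- c)).
    assert (exp (- c) <= 1).
    { destruct (Rle_lt_or_eq_dec 0 c (proj1 Hc)) as [Hpos|<-].
      - left. rewrite <- exp_0. apply exp_increasing. lra.
      - rewrite Ropp_0, exp_0. lra. }
    nra. }
  unfold F in HFt. rewrite Hf0, Ropp_0, exp_0 in HFt.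
  assert (exp (- t) * f t <= t * C) by nra.
  rewrite exp_Ropp in *. pose proof (exp_pos t).
  apply (Rmult_le_reg_l (/ exp t)); [apply Rinv_0_lt_compat; lra|].
  rewrite <- Rmult_assoc, Rinv_l by lra. lra.
Qed.

Section Energy.
Variables (n : nat) (g B : R).
Hypothesis Hn : (2 <= n)%nat.
Hypothesis HB : Rabs (g - INR n) <= B.

Definition err_re (j : nat) (t : R) : R := evo_re n g j t - psi_re n j t.
Definition err_im (j : nat) (t : R) : R := evo_im n g j t - psi_im n j t.

Definition energy (J : nat) (t : R) : R :=
  sum_f_R0 (fun j => err_re j t * err_re j t + err_im j t * err_im j t) J.

Definition flux (J : nat) (t : R) : R :=
  err_re J t * err_im (S J) t - err_im J t * err_re (S J) t.

Definition source (t : R) : R :=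
  err_re 1 t * res_re n g 1 t - err_im 1 t * res_im n g 1 t
  + err_re (S n) t * res_re n g (S n) t - err_im (S n) t * res_im n g (S n) t.

Lemma err_re_derive j t :
  is_derive (err_re j) t (Hclosed n g (fun i => err_im i t) j + res_re n g j t).
Proof.
  replace (Hclosed n g (fun i => err_im i t) j + res_re n g j t)
    with (Hop n g (fun i => evo_im n g i t) j
          - (Hclosed n g (fun i => psi_im n i t) j - res_re n g j t)).
  - apply (is_derive_minus (evo_re n g j) (psi_re n j));
      [apply evo_re_derive, Hn|apply psi_re_derive, Hn].
  - rewrite Hop_Hclosed by exact Hn. unfold err_im. rewrite <- Hclosed_sub. ring.
Qed.

Lemma err_im_derive j t :
  is_derive (err_im j) t (- Hclosed n g (fun i => err_re i t) j - res_im n g j t).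
Proof.
  replace (- Hclosed n g (fun i => err_re i t) j - res_im n g j t)
    with (- Hop n g (fun i => evo_re n g i t) j
          - (- Hclosed n g (fun i => psi_re n i t) j + res_im n g j t)).
  - apply (is_derive_minus (evo_im n g j) (psi_im n j));
      [apply evo_im_derive, Hn|apply psi_im_derive, Hn].
  - rewrite Hop_Hclosed by exact Hn. unfold err_re. rewrite <- Hclosed_sub. ring.
Qed.

Lemma energy_derive J t : (S n <= J)%nat ->
  is_derive (energy J) t (2 * flux J t + 2 * source t).
Proof.
  intros HJ.
  replace (2 * flux J t + 2 * source t) with
    (sum_f_R0 (fun j => 2 * (err_re j t * (Hclosed n g (fun i => err_im i t) j + res_re n g j t))
       + 2 * (err_im j t * (- Hclosed n g (fun i => err_re i t) j - res_im n g j t))) J).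
  { apply is_derive_sum_f_R0. intros j _.
    apply is_derive_sum_sqr; [apply err_re_derive|apply err_im_derive]. }
  rewrite (sum_eq _ (fun j =>
      (err_re j t * Hclosed n g (fun i => err_im i t) j
       - err_im j t * Hclosed n g (fun i => err_re i t) j) * 2
      + ((if Nat.eqb j 1 then err_re 1 t * res_re n g 1 t - err_im 1 t * res_im n g 1 t else 0)
         + (if Nat.eqb j (S n)
            then err_re (S n) t * res_re n g (S n) t - err_im (S n) t * res_im n g (S n) t
            else 0)) * 2)).
  2:{ intros j _. unfold res_re, res_im. case_nat; subst; ring. }
  rewrite plus_sum, <- !scal_sum, sum_Hclosed_skew, plus_sum, !sum_f_R0_indicator by lia.
  unfold flux, source. ring.
Qed.

Lemma res_abs_le t :
  Rabs (res_re n g 1 t) <= 2 * B /\ Rabs (res_im n g 1 t) <= 2 * B /\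
  Rabs (res_re n g (S n) t) <= 2 /\ Rabs (res_im n g (S n) t) <= 2.
Proof.
  unfold res_re, res_im. case_nat. rewrite !Rplus_0_r, !Rplus_0_l, !Rabs_mult.
  pose proof (Rabs_pos (g - INR n)).
  pose proof (psi_re_abs_le n 1 t ltac:(lia)). pose proof (psi_im_abs_le n 1 t ltac:(lia)).
  pose proof (psi_re_abs_le n n t ltac:(lia)). pose proof (psi_im_abs_le n n t ltac:(lia)).
  pose proof (Rabs_pos (psi_re n 1 t)). pose proof (Rabs_pos (psi_im n 1 t)).
  repeat split; nra.
Qed.

Lemma energy_rate_le J t : (S n <= J)%nat ->
  2 * flux J t + 2 * source t <= energy J t + (8 * (B * B) + 8) + 2 * Rabs (flux J t).
Proof.
  intros HJ.
  assert (Henergy : (err_re 1 t * err_re 1 t + err_im 1 t * err_im 1 t)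
      + (err_re (S n) t * err_re (S n) t + err_im (S n) t * err_im (S n) t) <= energy J t).
  { apply (sum_f_R0_ge_two_terms (fun j => err_re j t * err_re j t + err_im j t * err_im j t));
      try lia.
    intros j. nra. }
  assert (Hsqr : forall a b, Rabs a <= b -> a * a <= b * b).
  { intros a b Hab. pose proof (Rabs_pos a).
    replace (a * a) with (Rabs a * Rabs a) by (rewrite <- Rabs_mult; apply Rabs_pos_eq; nra).
    nra. }
  assert (Hamgm : forall a b, 2 * (a * b) <= a * a + b * b /\ - (2 * (a * b)) <= a * a + b * b)
    by (intros a b; pose proof (Rle_0_sqr (a - b)); pose proof (Rle_0_sqr (a + b));
        unfold Rsqr in *; split; lra).
  destruct (res_abs_le t) as (H1 & H2 & H3 & H4).
  apply Hsqr in H1. apply Hsqr in H2. apply Hsqr in H3. apply Hsqr in H4.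
  pose proof (Rle_abs (flux J t)).
  unfold source.
  destruct (Hamgm (err_re 1 t) (res_re n g 1 t)), (Hamgm (err_im 1 t) (res_im n g 1 t)),
    (Hamgm (err_re (S n) t) (res_re n g (S n) t)), (Hamgm (err_im (S n) t) (res_im n g (S n) t)).
  lra.
Qed.

Lemma energy_at_0 J : energy J 0 = 0.
Proof.
  apply sum_f_R0_zero. intros j _.
  unfold err_re, err_im, evo_re, evo_im. rewrite !PSeries_0.
  unfold evo_coef, psi_re, psi_im. change (Hpow n g 0 (z1 n)) with (z1 n).
  cbn [ipow fst snd fact]. change (INR 1) with 1.
  rewrite !Rmult_0_r, sin_0, cos_0. pose proof (omega_pos n ltac:(lia)).
  unfold z1, omega in *. case_nat; field; lra.
Qed.

Lemma flux_far_le K t : (1 <= K)%nat -> 2 * exp (2 * Hnorm_bound n g) <= 2 ^ K ->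
  Rabs t <= 1 -> 2 * Rabs (flux (n + K) t) <= 1.
Proof.
  intros HK H2K Ht.
  unfold flux, err_re, err_im. rewrite !psi_re_out, !psi_im_out by lia. rewrite !Rminus_0_r.
  replace (S (n + K)) with (n + S K)%nat by lia.
  set (T := exp (2 * Hnorm_bound n g) / 2 ^ K).
  assert (H2 : 0 < 2 ^ K) by (apply pow_lt; lra).
  assert (HT : 0 <= T <= 1 / 2).
  { pose proof (exp_pos (2 * Hnorm_bound n g)). unfold T. split.
    - apply Rlt_le, Rdiv_lt_0_compat; lra.
    - apply (Rmult_le_reg_r (2 ^ K)); [exact H2|].
      unfold Rdiv. rewrite Rmult_assoc, Rinv_l by lra. lra. }
  assert (HTS : exp (2 * Hnorm_bound n g) / 2 ^ S K <= T).
  { unfold T, Rdiv. simpl. rewrite Rinv_mult. pose proof (exp_pos (2 * Hnorm_bound n g)).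
    assert (0 < / 2 ^ K) by (apply Rinv_0_lt_compat; lra). nra. }
  pose proof (evo_coef_PSeries_tail n g Hn _ K t ipow_fst_abs_le Ht) as Ha.
  pose proof (evo_coef_PSeries_tail n g Hn _ K t ipow_snd_opp_abs_le Ht) as Hc.
  pose proof (evo_coef_PSeries_tail n g Hn _ (S K) t ipow_fst_abs_le Ht) as Hd.
  pose proof (evo_coef_PSeries_tail n g Hn _ (S K) t ipow_snd_opp_abs_le Ht) as Hb.
  fold T in Ha, Hc. fold (evo_re n g (n + K) t) in Ha. fold (evo_im n g (n + K) t) in Hc.
  fold (evo_re n g (n + S K) t) in Hd. fold (evo_im n g (n + S K) t) in Hb.
  set (a := evo_re n g (n + K) t) in *. set (b := evo_im n g (n + S K) t) in *.
  set (c := evo_im n g (n + K) t) in *. set (d := evo_re n g (n + S K) t) in *.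
  assert (Rabs (a * b - c * d) <= Rabs a * Rabs b + Rabs c * Rabs d).
  { unfold Rminus. eapply Rle_trans; [apply Rabs_triang|]. rewrite Rabs_Ropp, !Rabs_mult. lra. }
  pose proof (Rabs_pos a). pose proof (Rabs_pos b). pose proof (Rabs_pos c). pose proof (Rabs_pos d).
  assert (Rabs a * Rabs b <= T * T) by (apply Rmult_le_compat; lra).
  assert (Rabs c * Rabs d <= T * T) by (apply Rmult_le_compat; lra).
  nra.
Qed.

End Energy.

Lemma pow2_unbounded b : exists K, (1 <= K)%nat /\ b <= 2 ^ K.
Proof.
  destruct (Pow_x_infinity 2 ltac:(rewrite Rabs_pos_eq; lra) b) as [N HN].
  exists (Nat.max N 1). split; [lia|].
  specialize (HN (Nat.max N 1) ltac:(lia)).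
  rewrite Rabs_pos_eq in HN by (apply pow_le; lra). lra.
Qed.

Lemma err_vertex1_sqr_le n g B t : (2 <= n)%nat -> Rabs (g - INR n) <= B -> 0 <= t <= 1 ->
  err_re n g 1 t * err_re n g 1 t + err_im n g 1 t * err_im n g 1 t
  <= 3 * t * (8 * (B * B) + 9).
Proof.
  intros Hn HB Ht.
  destruct (pow2_unbounded (2 * exp (2 * Hnorm_bound n g))) as [K [HK H2K]].
  set (C := 8 * (B * B) + 9).
  assert (HC : 0 <= C) by (unfold C; nra).
  assert (Hgronwall : energy n g (n + K) t <= exp t * (t * C)).
  { apply (gronwall_from_zero (energy n g (n + K)) (fun s => 2 * flux n g (n + K) s + 2 * source n g s));
      [exact HC|apply Ht|apply energy_at_0, Hn|intros s; apply energy_derive; lia|].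
    intros s Hs.
    pose proof (energy_rate_le n g B Hn HB (n + K) s ltac:(lia)).
    pose proof (flux_far_le n g Hn K s HK H2K ltac:(rewrite Rabs_pos_eq; lra)).
    unfold C. lra. }
  assert (Hexp : exp t <= 3).
  { eapply Rle_trans; [|apply exp_le_3].
    destruct (Req_dec t 1) as [->|]; [lra|left; apply exp_increasing; lra]. }
  assert (Hsum : (err_re n g 1 t * err_re n g 1 t + err_im n g 1 t * err_im n g 1 t)
      + (err_re n g (S n) t * err_re n g (S n) t + err_im n g (S n) t * err_im n g (S n) t)
      <= energy n g (n + K) t).
  { apply (sum_f_R0_ge_two_terms
             (fun j => err_re n g j t * err_re n g j t + err_im n g j t * err_im n g j t));
      try lia.
    intros j. nra. }
  assert (0 <= err_re n g (S n) t * err_re n g (S n) t + err_im n g (S n) t * err_im n g (S n) t)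
    by nra.
  assert (exp t * (t * C) <= 3 * (t * C))
    by (apply Rmult_le_compat_r; [apply Rmult_le_pos; lra|exact Hexp]).
  fold C. lra.
Qed.

Lemma amp_term_eq n g t k :
  amp_term n g t k = (evo_coef n g (fun k => fst (ipow k)) 1 k * t ^ k,
                      evo_coef n g (fun k => - snd (ipow k)) 1 k * t ^ k).
Proof.
  unfold amp_term. rewrite pow_n_mul_Ci. unfold Cmult, RtoC; simpl.
  replace (- t) with (-1 * t) by ring. rewrite Rpow_mult_distr.
  destruct (ipow_parity k) as [Hre Him].
  unfold evo_coef, Rdiv. f_equal.
  - rewrite <- Hre at 2. ring.
  - replace (- snd (ipow k)) with (snd (ipow k) * (-1) ^ k) by exact Him. ring.
Qed.

Lemma is_series_C_pair (a b : nat -> R) la lb :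
  is_series a la -> is_series b lb ->
  is_series (K := C_AbsRing) (V := C_NormedModule) (fun k => (a k, b k)) (la, lb).
Proof.
  intros Ha Hb. unfold is_series in *.
  apply (filterlim_ext (fun N => (sum_n a N, sum_n b N))).
  { intros N. induction N as [|N IH]; [rewrite !sum_O; reflexivity|].
    rewrite !sum_Sn, <- IH. reflexivity. }
  apply (proj2 (filterlim_locally (U := C_UniformSpace) (fun N => (sum_n a N, sum_n b N))
                   ((la, lb) : C))).
  intros eps.
  generalize (filter_and _ _ (proj1 (filterlim_locally _ _) Ha eps)
                             (proj1 (filterlim_locally _ _) Hb eps)).
  apply filter_imp. intros N [Hre Him]. split; assumption.
Qed.

Lemma amplitude_is_evo n g t : (2 <= n)%nat ->
  amplitude_is n g t (evo_re n g 1 t, evo_im n g 1 t).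
Proof.
  intros Hn. unfold amplitude_is.
  apply (is_series_ext _ _ _ (fun k => eq_sym (amp_term_eq n g t k))).
  apply is_series_C_pair; apply (proj1 (is_pseries_R _ t _)), PSeries_correct, CV_radius_inside,
    evo_coef_radius; auto using ipow_fst_abs_le, ipow_snd_opp_abs_le.
Qed.

Lemma psi_vertex1_Cmod n t : (1 <= n)%nat -> omega n * t = PI / 2 ->
  Cmod (psi_re n 1 t, psi_im n 1 t) = 1.
Proof.
  intros Hn Ht. pose proof (omega_pos n Hn).
  unfold psi_re, psi_im. case_nat. rewrite Ht, sin_PI2, cos_PI2.
  unfold Cmod. simpl. transitivity (sqrt 1); [f_equal|apply sqrt_1].
  transitivity (Rsqr (sin (theta n * t)) + Rsqr (cos (theta n * t))).
  - unfold Rsqr. field. lra.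
  - apply sin2_cos2.
Qed.

Lemma quarter_period_bounds n C : 9 <= C -> (24 * C) * (24 * C) <= INR n ->
  let t := PI / (2 * omega n) in 0 <= t <= 1 /\ 3 * t * C <= 1 / 4 /\ omega n * t = PI / 2.
Proof.
  intros HC Hn t.
  assert (Hom : 24 * C <= omega n).
  { rewrite <- (sqrt_square (24 * C)) by lra. apply sqrt_le_1_alt. exact Hn. }
  assert (HPI : 0 < PI <= 4) by (split; [apply PI_RGT_0|apply PI_4]).
  assert (Ht : t * omega n = PI / 2) by (unfold t; field; lra).
  assert (0 <= t) by (unfold t; apply Rle_mult_inv_pos; lra).
  repeat split; try nra.
Qed.

Lemma evo_vertex1_Cmod_ge n g B t :
  (2 <= n)%nat -> Rabs (g - INR n) <= B -> 0 <= t <= 1 ->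
  3 * t * (8 * (B * B) + 9) <= 1 / 4 -> omega n * t = PI / 2 ->
  1 / 2 <= Cmod (evo_re n g 1 t, evo_im n g 1 t).
Proof.
  intros Hn HB Ht Hsmall Hquarter.
  pose proof (err_vertex1_sqr_le n g B t Hn HB Ht) as Herr.
  set (w := (err_re n g 1 t, err_im n g 1 t) : C).
  assert (Hw : Cmod w <= 1 / 2).
  { rewrite <- (sqrt_square (1 / 2)) by lra. apply sqrt_le_1_alt. unfold w. simpl. nra. }
  pose proof (Cmod_triangle (evo_re n g 1 t, evo_im n g 1 t) (Copp w)) as Htri.
  replace (Cplus (evo_re n g 1 t, evo_im n g 1 t) (Copp w)) with (psi_re n 1 t, psi_im n 1 t)
    in Htri by (unfold w, err_re, err_im, Cplus, Copp; simpl; f_equal; ring).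
  rewrite psi_vertex1_Cmod, Cmod_opp in Htri by (auto; lia).
  lra.
Qed.

Theorem theorem1 :
  forall gamma : nat -> R,
    (exists B : R, forall n : nat, Rabs (gamma n - INR n) <= B) ->
    exists c : R, 0 < c /\
    exists N : nat, forall n : nat, (2 <= n)%nat -> (N <= n)%nat ->
      exists l : C,
        amplitude_is n (gamma n) (PI / (2 * sqrt (INR n))) l /\ c <= Cmod l.
Proof.
  intros gamma [B HB].
  set (C := 8 * (B * B) + 9).
  assert (HC : 9 <= C) by (unfold C; nra).
  destruct (INR_unbounded ((24 * C) * (24 * C))) as [N HN].
  exists (1 / 2). split; [lra|]. exists N. intros n Hn HNn.
  pose proof (le_INR _ _ HNn).
  destruct (quarter_period_bounds n C HC ltac:(lra)) as (Ht & Hsmall & Hquarter).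
  exists (evo_re n (gamma n) 1 (PI / (2 * omega n)), evo_im n (gamma n) 1 (PI / (2 * omega n))).
  split.
  - apply amplitude_is_evo, Hn.
  - apply (evo_vertex1_Cmod_ge n (gamma n) B); auto.
Qed.
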